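(* Let $N$ be a finite set with $|N|\ge2$, and let $m_1,m_2:\mathcal{P}(N)\to\mathbb{R}$ generate distinct extreme rays of the cone of standardized supermodular set functions. For $i=1,2$ let $o_i\in\mathbb{R}^{\Upsilon}$ be given by $o_i(a|B)=m_i(\{a\}\cup B)-m_i(B)$ and let $u_i$ be the common value of $\langle o_i,\eta_H\rangle$ over full graphs $H$ over $N$. Then the faces $F_i=\{\eta\in P_N:\langle o_i,\eta\rangle=u_i\}$ of $P_N$ ($i=1,2$) are inclusion-incomparable.
   Context: $\mathrm{DAG}(N)$ is the set of acyclic directed graphs over $N$; $\mathrm{pa}_G(a)$ is the parent set of $a$ in $G$. A full graph is an acyclic directed graph over $N$ in which every pair of distinct nodes is adjacent. $\Upsilon=\{(a|B): a\in N,\ \emptyset\neq B\subseteq N\setminus\{a\}\}$; $\eta_G\in\mathbb{R}^{\Upsilon}$ has $\eta_G(a|B)=1$ if $B=\mathrm{pa}_G(a)$, else $0$; $P_N=\mathrm{conv}\{\eta_G:G\in\mathrm{DAG}(N)\}$. A set function $m$ is standardized if $m(S)=0$ for $|S|\le1$, supermodular if $m(U)+m(V)\le m(U\cup V)+m(U\cap V)$ for all $U,V\subseteq N$. The standardized supermodular functions form a pointed polyhedral cone. (For a standardized supermodular $m$, the inequality $\langle o,\eta\rangle\le u$ so defined is valid on $P_N$ and tight at all full graphs.) *)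

From HB Require Import structures.
From mathcomp Require Import all_boot all_order all_algebra.
From mathcomp Require Import reals.
Set Implicit Arguments. Unset Strict Implicit. Unset Printing Implicit Defensive.
Import Order.TTheory GRing.Theory Num.Theory.
Local Open Scope ring_scope.

Section Defs.
Variable R : realType.
Variable N : finType.

(** A directed graph over N is given by its parent sets: [pa a] = pa_G(a). *)
Definition graph := {ffun N -> {set N}}.

Definition edge (G : graph) : rel N := fun x y => x \in G y.

Definition is_dag (G : graph) : bool :=
  [forall x, x \notin G x] &&
  [forall x, [forall y, edge G x y ==> ~~ connect (edge G) y x]].

Definition is_full (G : graph) : bool :=
  is_dag G && [forall a, [forall b, (a != b) ==> ((a \in G b) || (b \in G a))]].

Definition ups_pred (p : N * {set N}) : bool := (p.1 \notin p.2) && (p.2 != set0).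
Definition Ups := {p : N * {set N} | ups_pred p}.

Definition ups_a (k : Ups) : N := (val k).1.
Definition ups_B (k : Ups) : {set N} := (val k).2.

Definition etaG (G : graph) (k : Ups) : R :=
  if ups_B k == G (ups_a k) then 1 else 0.

Definition inner (o e : Ups -> R) : R := \sum_(k : Ups) o k * e k.

(** P_N = conv{eta_G : G in DAG(N)} (DAG(N) finite, so finite convex combos) *)
Definition in_PN (e : Ups -> R) : Prop :=
  exists lam : graph -> R,
    (forall G, 0 <= lam G) /\ (forall G, ~~ is_dag G -> lam G = 0) /\
    \sum_(G : graph | is_dag G) lam G = 1 /\
    forall k, e k = \sum_(G : graph | is_dag G) lam G * etaG G k.

Definition standardized (m : {set N} -> R) : Prop :=
  forall S : {set N}, (#|S| <= 1)%N -> m S = 0.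
Definition supermodular (m : {set N} -> R) : Prop :=
  forall U V : {set N}, m U + m V <= m (U :|: V) + m (U :&: V).
Definition std_supermod (m : {set N} -> R) : Prop :=
  standardized m /\ supermodular m.

Definition extreme_ray_gen (m : {set N} -> R) : Prop :=
  std_supermod m /\ (exists S, m S != 0) /\
  forall m1 m2 : {set N} -> R, std_supermod m1 -> std_supermod m2 ->
    (forall S, m S = m1 S + m2 S) ->
    exists c : R, 0 <= c /\ forall S, m1 S = c * m S.

Definition same_ray (m1 m2 : {set N} -> R) : Prop :=
  exists c : R, 0 < c /\ forall S, m2 S = c * m1 S.

Definition o_of (m : {set N} -> R) (k : Ups) : R :=
  m (ups_a k |: ups_B k) - m (ups_B k).

Definition face (o : Ups -> R) (u : R) (e : Ups -> R) : Prop :=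
  in_PN e /\ inner o e = u.

End Defs.

From mathcomp Require Import all_boot all_order all_algebra.
From mathcomp Require Import reals lra zify.
Import Order.TTheory GRing.Theory Num.Theory.
Local Open Scope ring_scope.
Set Implicit Arguments. Unset Strict Implicit. Unset Printing Implicit Defensive.

(* A standardized set function m is supermodular iff all its elementary second
   differences d_m(a,b|C) = m(abC) - m(bC) - m(aC) + m(C), a <> b, are nonnegative.
   For a notin C, d_m(a,b|C) = <o_m, eta_H> - <o_m, eta_G>, where H is the full graph
   of a linear order C < b < a < rest and G is the DAG obtained from H by cutting
   the parents of a down to C.  Hence if F_1 is contained in F_2, then eta_G lies
   in F_1, thus in F_2, whenever d_{m1}(a,b|C) = 0, so every vanishing elementary
   difference of m1 vanishes for m2.  Then m1 - eps m2 stays supermodular for a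
   small eps > 0, and extremality of m1 makes m2 a positive multiple of m1. *)

Lemma setU1_ind (T : finType) (P : {set T} -> Prop) :
  P set0 -> (forall (x : T) (A : {set T}), x \notin A -> P A -> P (x |: A)) -> forall A, P A.
Proof.
move=> P0 PU A; have [n] := ubnP #|A|; elim: n A => // n IHn A ltAn.
have [->|[x xA]] := set_0Vmem A; first exact: P0.
rewrite -(setD1K xA); apply: PU; first by rewrite setD11.
by apply: IHn; rewrite -ltnS (leq_trans _ ltAn) // ltnS (cardsD1 x A) xA.
Qed.

Lemma ltn_lex_code (c1 c2 r1 r2 n : nat) : (r1 < n)%N -> (r2 < n)%N ->
  (c1 * n + r1 < c2 * n + r2)%N = (c1 < c2)%N || (c1 == c2) && (r1 < r2)%N.
Proof.
move=> r1n r2n; case: (ltngtP c1 c2) => [lt12|lt21|->]; last by rewrite ltn_add2l.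
- have : (c1.+1 * n <= c2 * n)%N by rewrite leq_mul2r lt12 orbT.
  rewrite mulSn => le12 /=; apply/idP; lia.
- have : (c2.+1 * n <= c1 * n)%N by rewrite leq_mul2r lt21 orbT.
  rewrite mulSn => le21 /=; apply/negbTE; rewrite -leqNgt; lia.
Qed.

Section Increments.
Variables (R : realType) (N : finType).
Implicit Types (m : {set N} -> R) (a b : N) (A C D : {set N}).

Definition incr m A C : R := m (A :|: C) - m C.

Definition diff2 m a b C : R := incr m [set a] (b |: C) - incr m [set a] C.

Lemma incrU m A B C : incr m (A :|: B) C = incr m A (B :|: C) + incr m B C.
Proof. by rewrite /incr setUA addrA subrK. Qed.

Lemma diff2_ge0 m a b C : supermodular m -> a != b -> 0 <= diff2 m a b C.
Proof.
move=> smod ab; have := smod (a |: C) (b |: C).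
rewrite -setUIl setUACA setUid -setUA.
have -> : [set a] :&: [set b] = set0.
  by apply/setP=> y; rewrite !inE; case: eqP => // ->; rewrite (negbTE ab).
rewrite set0U /diff2 /incr; lra.
Qed.

Lemma diff2_eq0 m a b C : a \in C -> diff2 m a b C = 0.
Proof.
move=> aC; have aX (X : {set N}) : C \subset X -> a |: X = X.
  by move=> CX; apply/setUidPr; rewrite sub1set (subsetP CX).
by rewrite /diff2 /incr !aX ?subrr ?subsetUr.
Qed.

Section Monotone.
Variable m : {set N} -> R.
Hypothesis diff2m_ge0 : forall a b C, a != b -> 0 <= diff2 m a b C.

Lemma incr1_mono a C D : a \notin D -> incr m [set a] C <= incr m [set a] (D :|: C).
Proof.
elim/setU1_ind: D => [_|x D _ IHD]; first by rewrite set0U.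
rewrite in_setU1 negb_or => /andP [ax aD].
apply: le_trans (IHD aD) _; rewrite -setUA -subr_ge0.
exact: diff2m_ge0.
Qed.

Lemma incr_mono A C D : [disjoint A & D] -> incr m A C <= incr m A (D :|: C).
Proof.
elim/setU1_ind: A C => [C _|x A _ IHA C]; first by rewrite /incr !set0U !subrr.
rewrite -setI_eq0 setIUl setU_eq0 !setI_eq0 disjoints1 => /andP [xD dAD].
rewrite !incrU setUCA; apply: lerD; [exact: incr1_mono | exact: IHA].
Qed.

Lemma supermodular_diff2 : supermodular m.
Proof.
move=> U V; have := @incr_mono (U :\: V) (U :&: V) (V :\: U).
rewrite /incr setUC setID [V :\: U :|: _]setUC setIC setID.
have -> : U :\: V :|: V = U :|: V.
  by apply/setP=> y; rewrite !inE; case: (y \in V); rewrite ?orbT ?orbF.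
rewrite setIC => h.
have : m U - m (U :&: V) <= m (U :|: V) - m V.
  apply: h; rewrite -setI_eq0; apply/eqP/setP => y; rewrite !inE.
  by case: (y \in U); case: (y \in V).
lra.
Qed.

End Monotone.

Lemma supermodularP m :
  supermodular m <-> forall a b C, a != b -> 0 <= diff2 m a b C.
Proof. by split=> [smod a b C|]; [exact: diff2_ge0 | exact: supermodular_diff2]. Qed.

End Increments.

Lemma exists_pos_scaling (R : realType) (I : finType) (P : pred I) (f g : I -> R) :
  (forall i, P i -> 0 <= f i) -> (forall i, P i -> f i = 0 -> g i = 0) ->
  exists2 eps : R, 0 < eps & forall i, P i -> eps * g i <= f i.
Proof.
move=> f_ge0 fg0; have normg1_gt0 i : 0 < `|g i| + 1 by rewrite ltr_wpDl.
pose eps := \big[Order.min/1]_(i | P i && (0 < f i)) (f i / (`|g i| + 1)).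
have eps_gt0 : 0 < eps.
  by apply/bigmin_gtP; split=> // i /andP [_ fi_gt0]; rewrite divr_gt0.
exists eps => // i Pi; have := f_ge0 i Pi; rewrite le_eqVlt => /orP [/eqP fi0|fi_gt0].
  by rewrite -fi0 fg0 // mulr0.
have : eps <= f i / (`|g i| + 1) by apply: bigmin_le_cond; rewrite Pi fi_gt0.
rewrite ler_pdivlMr // => le_f; apply: le_trans le_f.
by rewrite ler_pM2l // (le_trans (ler_norm _)) // lerDl.
Qed.

Section ExtremeRays.
Variables (R : realType) (N : finType).
Implicit Types m : {set N} -> R.

Lemma std_supermodZ (c : R) m :
  0 <= c -> std_supermod m -> std_supermod (fun S => c * m S).
Proof.
move=> c_ge0 [std smod]; split=> [S S1|U V]; first by rewrite std ?mulr0.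
by rewrite -!mulrDr ler_wpM2l.
Qed.

Lemma diff2B m m' a b C :
  diff2 (fun S => m S - m' S) a b C = diff2 m a b C - diff2 m' a b C.
Proof. by rewrite /diff2 /incr; lra. Qed.

Lemma diff2Z (c : R) m a b C : diff2 (fun S => c * m S) a b C = c * diff2 m a b C.
Proof. by rewrite /diff2 /incr !mulrBr. Qed.

Lemma same_ray_of_diff2_eq0 m m' :
  extreme_ray_gen m -> extreme_ray_gen m' ->
  (forall a b C, a != b -> diff2 m a b C = 0 -> diff2 m' a b C = 0) ->
  same_ray m m'.
Proof.
move=> [[std smod] [_ ext]] [std_m' [[S0 m'S0] _]] diff2_eq0.
have [eps eps_gt0 le_eps] := exists_pos_scaling
  (P := fun t : N * N * {set N} => t.1.1 != t.1.2)
  (f := fun t => diff2 m t.1.1 t.1.2 t.2) (g := fun t => diff2 m' t.1.1 t.1.2 t.2)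
  (fun t ab => diff2_ge0 t.2 smod ab) (fun t ab => diff2_eq0 _ _ t.2 ab).
have std_eps : std_supermod (fun S => eps * m' S) by exact: std_supermodZ (ltW eps_gt0) _.
have std_rest : std_supermod (fun S => m S - eps * m' S).
  split=> [S S1|]; first by rewrite std // (proj1 std_m') // mulr0 subr0.
  apply/supermodularP => a b C ab; rewrite diff2B diff2Z subr_ge0.
  exact: (le_eps (a, b, C)).
have [c [c_ge0 eps_m'E]] := ext _ _ std_eps std_rest (fun S => esym (subrKC _ _)).
have c_neq0 : c != 0.
  apply: contraNneq m'S0 => c0; move: (eps_m'E S0); rewrite c0 mul0r => /eqP.
  by rewrite mulf_eq0 gt_eqF.
exists (c / eps); split=> [|S]; first by rewrite divr_gt0 // lt_def c_neq0.
by rewrite mulrAC -eps_m'E mulrAC divff ?mul1r // gt_eqF.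
Qed.

Lemma same_ray_sym m m' : same_ray m m' -> same_ray m' m.
Proof.
move=> [c [c_gt0 m'E]]; exists c^-1; split=> [|S]; first by rewrite invr_gt0.
by rewrite m'E mulKf // gt_eqF.
Qed.

End ExtremeRays.

Section Graphs.
Variables (R : realType) (N : finType).
Implicit Types (m : {set N} -> R) (G H : graph N).

Lemma dag_loopless G : is_dag G -> forall x, x \notin G x.
Proof. by case/andP => /forallP. Qed.

Lemma dag_of_key G (key : N -> nat) :
  (forall x y, x \in G y -> (key x < key y)%N) -> is_dag G.
Proof.
move=> key_lt; apply/andP; split.
  by apply/forallP => x; apply/negP => /key_lt; rewrite ltnn.
apply/forallP => x; apply/forallP => y; apply/implyP => /key_lt lt_xy.
apply/negP => /connectP [p path_yp x_last].
suff : (key y <= key (last y p))%N by rewrite -x_last leqNgt lt_xy.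
elim: p y path_yp {lt_xy x_last} => //= z p IHp y /andP [/key_lt lt_yz path_zp].
exact: leq_trans (ltnW lt_yz) (IHp z path_zp).
Qed.

Lemma in_PN_etaG G : is_dag G -> in_PN (etaG R G).
Proof.
move=> dagG; exists (fun H => if H == G then 1 else 0).
split=> [H|]; first by case: ifP.
split=> [H|]; first by case: eqP => // ->; rewrite dagG.
have others H : is_dag H && (H != G) -> (if H == G then 1 else 0) = 0 :> R.
  by case/andP => _ /negbTE ->.
split=> [|k]; first by rewrite (bigD1 G) //= eqxx big1 ?addr0.
rewrite (bigD1 G) //= eqxx mul1r big1 ?addr0 // => H /others ->.
by rewrite mul0r.
Qed.

Lemma inner_o_of_etaG m G : standardized m -> (forall x, x \notin G x) ->
  inner (o_of m) (etaG R G) = \sum_x incr m [set x] (G x).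
Proof.
move=> std loopless; rewrite /inner (partition_big (@ups_a N) predT) //=.
apply: eq_bigr => x _; have [Gx0|Gx_neq0] := eqVneq (G x) set0.
  rewrite Gx0 /incr setU0 !std ?cards1 ?cards0 // subrr.
  apply: big1 => k /eqP kx; rewrite /etaG kx Gx0.
  by case/andP: (valP k) => _ /negbTE ->; rewrite mulr0.
pose kx : Ups N := exist _ (x, G x) (introT andP (conj (loopless x) Gx_neq0)).
rewrite (bigD1 kx) //= big1 ?addr0; first by rewrite /etaG /o_of eqxx mulr1.
move=> k /andP [/eqP kx_a k_neq]; rewrite /etaG kx_a.
case: eqP => [kB|]; last by rewrite mulr0.
case/eqP: k_neq; apply: val_inj.
by case: k kx_a kB => [[y B] ?]; rewrite /ups_a /ups_B /= => -> ->.
Qed.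

Lemma inner_etaG_sub m G H b : standardized m ->
  (forall x, x \notin G x) -> (forall x, x \notin H x) ->
  (forall x, x != b -> G x = H x) ->
  inner (o_of m) (etaG R H) - inner (o_of m) (etaG R G) =
  incr m [set b] (H b) - incr m [set b] (G b).
Proof.
move=> std loopG loopH GH; rewrite !inner_o_of_etaG // (bigD1 b) //=.
rewrite [X in _ - X](bigD1 b) //= (eq_bigr _ (fun x xb => congr1 _ (GH x xb))).
by rewrite opprD addrACA subrr addr0.
Qed.

End Graphs.

Section Realization.
Variables (R : realType) (N : finType) (a b : N) (C : {set N}).
Hypotheses (ab : a != b) (aC : a \notin C).

Definition block (x : N) : nat :=
  if x \in C then 0 else if x == b then 1 else if x == a then 2 else 3.

Definition order_key (x : N) : nat := block x * #|N| + enum_rank x.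

Lemma order_key_lt x y : (order_key x < order_key y)%N =
  (block x < block y)%N || (block x == block y) && (enum_rank x < enum_rank y)%N.
Proof. by rewrite ltn_lex_code // -cardE ltn_ord. Qed.

Lemma order_key_inj : injective order_key.
Proof.
move=> x y /(congr1 (modn^~ #|N|)); rewrite /order_key !modnMDl.
by rewrite !modn_small -?cardE ?ltn_ord // => /val_inj /enum_rank_inj.
Qed.

Definition linear_graph : graph N :=
  [ffun x => [set y | (order_key y < order_key x)%N]].

Definition cut_graph : graph N := [ffun x => if x == a then C else linear_graph x].

Lemma linear_graph_full : is_full linear_graph.
Proof.
apply/andP; split; first by apply: (@dag_of_key _ _ order_key) => x y; rewrite ffunE inE.
apply/forallP => x; apply/forallP => y; apply/implyP => xy.
rewrite !ffunE !inE; case: ltngtP => //= /order_key_inj yx.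
by rewrite yx eqxx in xy.
Qed.

Lemma cut_graph_dag : is_dag cut_graph.
Proof.
apply: (@dag_of_key _ _ order_key) => x y; rewrite ffunE; case: eqP => [->|_].
  by move=> xC; rewrite order_key_lt /block xC (negbTE aC) (negbTE ab) eqxx.
by rewrite ffunE inE.
Qed.

Lemma linear_graph_a : linear_graph a = b |: C.
Proof.
apply/setP => y; rewrite ffunE !inE order_key_lt /block (negbTE aC) (negbTE ab) eqxx.
case: (y \in C); rewrite ?orbT //; case: eqP => [->|_] //=; case: eqP => [->|_] //=.
by rewrite ltnn.
Qed.

Lemma inner_linear_sub_cut m : standardized m ->
  inner (o_of m) (etaG R linear_graph) - inner (o_of m) (etaG R cut_graph) =
  diff2 m a b C.
Proof.
move=> std; rewrite (inner_etaG_sub _ _ (b := a)) //.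
- by rewrite linear_graph_a ffunE eqxx.
- exact: dag_loopless cut_graph_dag.
- by apply: dag_loopless; case/andP: linear_graph_full.
- by move=> x /negbTE xa; rewrite ffunE xa.
Qed.

End Realization.

Lemma face_sub_diff2_eq0 (R : realType) (N : finType) (m m' : {set N} -> R) (u u' : R) :
  standardized m -> standardized m' ->
  (forall H : graph N, is_full H -> inner (o_of m) (etaG R H) = u) ->
  (forall H : graph N, is_full H -> inner (o_of m') (etaG R H) = u') ->
  (forall e, face (o_of m) u e -> face (o_of m') u' e) ->
  forall a b C, a != b -> diff2 m a b C = 0 -> diff2 m' a b C = 0.
Proof.
move=> std std' full_u full_u' face_sub a b C ab.
have [aC|aC diff2m_eq0] := boolP (a \in C); first by rewrite !diff2_eq0.
have full := linear_graph_full a b C.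
have [_ cut_u'] : face (o_of m') u' (etaG R (cut_graph a b C)).
  apply: face_sub; split; first exact/in_PN_etaG/cut_graph_dag.
  by apply/eqP; rewrite eq_sym -subr_eq0 -(full_u _ full) inner_linear_sub_cut // diff2m_eq0.
by rewrite -inner_linear_sub_cut // full_u' // cut_u' subrr.
Qed.

Theorem lemma8 (R : realType) (N : finType) (hN : (1 < #|N|)%N)
  (m1 m2 : {set N} -> R) (u1 u2 : R) :
  extreme_ray_gen m1 -> extreme_ray_gen m2 -> ~ same_ray m1 m2 ->
  (forall H : graph N, is_full H -> inner (o_of m1) ((etaG R H)) = u1) ->
  (forall H : graph N, is_full H -> inner (o_of m2) ((etaG R H)) = u2) ->
  ~ (forall e, face (o_of m1) u1 e -> face (o_of m2) u2 e) /\
  ~ (forall e, face (o_of m2) u2 e -> face (o_of m1) u1 e).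
Proof.
move=> ray1 ray2 not_same full_u1 full_u2.
have std1 : standardized m1 by case: ray1 => [[]].
have std2 : standardized m2 by case: ray2 => [[]].
split=> face_sub; apply: not_same.
  apply: (same_ray_of_diff2_eq0 ray1 ray2).
  exact: face_sub_diff2_eq0 std1 std2 full_u1 full_u2 face_sub.
apply/same_ray_sym/(same_ray_of_diff2_eq0 ray2 ray1).
exact: face_sub_diff2_eq0 std2 std1 full_u2 full_u1 face_sub.
Qed.
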